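(* Let $A \in \mathbb{R}^{n\times d}$, $b\in\mathbb{R}^n$, and suppose $Ax=b$ admits a solution $x^*$ (not necessarily unique). Let $w$ be a random variable in $\mathbb{R}^n$, $\mathcal{N}(w) = \mathrm{span}\lbrace z \in \mathbb{R}^d : \mathbb{P}[z'A'w=0]=1\rbrace$, $\mathcal{R}(w) = \mathcal{N}(w)^\perp$. Let $\lbrace w_\ell : \ell \geq 0\rbrace$ be random variables in $\mathbb{R}^n$ with $\mathbb{P}[A'w_\ell \in \mathcal{R}(w)] = 1$ for all $\ell$. Let $x_0 \in \mathbb{R}^d$ be arbitrary and $$x_{k+1} = x_k + \frac{A'w_k w_k'(b - Ax_k)}{\|A'w_k\|_2^2}, \quad k \geq 0.$$ Define stopping times $\tau_0 = 0$, $\tau_1 = \min\lbrace k\geq 0 : \mathrm{span}\lbrace A'w_0,\ldots,A'w_k\rbrace = \mathcal{R}(w)\rbrace$, and for $\ell \geq 2$, $\tau_\ell = \min\lbrace k > \tau_{\ell-1} : \mathrm{span}\lbrace A'w_{\tau_{\ell-1}+1},\ldots,A'w_k\rbrace = \mathcal{R}(w)\rbrace$ if $\tau_{\ell-1}<\infty$, and $\tau_\ell = \infty$ otherwise. When the stopping times are finite, let $\mathcal{F}_\ell$ ($\ell\in\mathbb{N}$) be the set of matrices $F$ whose columns form a maximal linearly independent subset of $\lbrace A'w_{\tau_{\ell-1}+1}/\|A'w_{\tau_{\ell-1}+1}\|_2, \ldots, A'w_{\tau_\ell}/\|A'w_{\tau_\ell}\|_2\rbrace$, and $\gamma_\ell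 = 1 - \min_{F\in\mathcal{F}_\ell}\det(F'F)$. Then $\gamma_\ell \in [0,1)$ and, for any $\ell$, on the event $\lbrace\tau_\ell<\infty\rbrace$, $$\|x_{\tau_\ell+1} - x^* - P_{\mathcal{N}(w)}(x_0 - x^* )\|_2^2 \leq \Big(\prod_{j=1}^\ell \gamma_j\Big) \|P_{\mathcal{R}(w)}(x_0 - x^* )\|_2^2.$$ Therefore, for any $k$, $$\|x_k - x^* - P_{\mathcal{N}(w)}(x_0 - x^* )\|_2^2 \leq \Big(\prod_{j=1}^{L(k)} \gamma_j\Big)\|P_{\mathcal{R}(w)}(x_0 - x^* )\|_2^2,$$ where $L(k) = \max\lbrace \ell : k \geq \tau_\ell + 1\rbrace$, on the event $\lbrace \tau_{L(k)} < \infty\rbrace$.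
   Context: $P_W$ denotes the orthogonal projection onto a subspace $W$; $A'$ is the transpose. The iteration presupposes $A'w_k \neq 0$ so that it is defined. *)

From HB Require Import structures.
From mathcomp Require Import all_boot all_order all_algebra.
From mathcomp Require Import all_classical all_reals all_analysis.
Set Implicit Arguments.
Unset Strict Implicit.
Unset Printing Implicit Defensive.
Import Order.TTheory GRing.Theory Num.Theory.
Local Open Scope ring_scope.
Local Open Scope classical_set_scope.

Section RK.
Variable R : realType.

Definition dotv (m : nat) (u v : 'cV[R]_m) : R := (u^T *m v) 0 0.
Definition norm2 (m : nat) (v : 'cV[R]_m) : R := Num.sqrt (dotv v v).

Definition spanS (m : nat) (S : set 'cV[R]_m) : set 'cV[R]_m :=
  [set v | exists (k : nat) (c : 'I_k -> R) (u : 'I_k -> 'cV[R]_m),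
      (forall i, S (u i)) /\ v = \sum_(i < k) c i *: u i].

Definition orthS (m : nat) (S : set 'cV[R]_m) : set 'cV[R]_m :=
  [set v | forall u, S u -> dotv u v = 0].

Definition projS (m : nat) (W : set 'cV[R]_m) (v : 'cV[R]_m) : 'cV[R]_m :=
  xget 0 [set p | W p /\ forall u, W u -> dotv u (v - p) = 0].

Definition first_time (p : nat -> Prop) : option nat :=
  if pselect (exists k, p k)
  then Some (xget 0%N [set k | p k /\ forall j, p j -> (k <= j)%N])
  else None.

Variables (dT : measure_display) (T : measurableType dT) (P : probability T R).
Variables (n d : nat) (A : 'M[R]_(n, d)) (b : 'cV[R]_n).

Definition Nspace (w : T -> 'cV[R]_n) : set 'cV[R]_d :=
  spanS [set z | P [set t | dotv z (A^T *m w t) = 0] = 1%E].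
Definition Rspace (w : T -> 'cV[R]_n) : set 'cV[R]_d := orthS (Nspace w).

Variables (w : T -> 'cV[R]_n) (ws : nat -> T -> 'cV[R]_n) (x0 : 'cV[R]_d).

Fixpoint xiter (t : T) (k : nat) : 'cV[R]_d :=
  match k with
  | 0 => x0
  | k'.+1 =>
      let xk := xiter t k' in
      let a := A^T *m ws k' t in
      xk + (norm2 a ^+ 2)^-1 *: (a *m ((ws k' t)^T *m (b - A *m xk)))
  end.

Definition segspan (t : T) (lo k : nat) : set 'cV[R]_d :=
  spanS [set v | exists j, (lo <= j <= k)%N /\ v = A^T *m ws j t].

(* stopping times; None encodes infinity *)
Fixpoint tau (t : T) (l : nat) : option nat :=
  match l with
  | 0 => Some 0%N
  | l'.+1 =>
      match tau t l' with
      | None => None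
      | Some s =>
          let lo := if l' is 0 then 0%N else s.+1 in
          first_time (fun k => (lo <= k)%N /\ segspan t lo k = Rspace w)
      end
  end.

Definition bstart (t : T) (l : nat) : nat :=
  match l with
  | 0 | 1 => 0%N
  | l'.+1 => if tau t l' is Some s then s.+1 else 0%N
  end.

Definition blockvecs (t : T) (l : nat) : set 'cV[R]_d :=
  [set v | exists j, (bstart t l <= j)%N /\
      (if tau t l is Some e then (j <= e)%N else False) /\
      v = (norm2 (A^T *m ws j t))^-1 *: (A^T *m ws j t)].

Definition Fmats (V : set 'cV[R]_d) : set {m : nat & 'M[R]_(d, m)} :=
  [set F | let M := projT2 F in
     (forall i j, col i M = col j M -> i = j) /\
     (forall i, V (col i M)) /\
     \rank M = projT1 F /\
     (forall v, V v -> (forall i, col i M != v) ->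
        (\rank (row_mx M v) < (projT1 F).+1)%N)].

Definition gamma (t : T) (l : nat) : R :=
  1 - inf [set \det ((projT2 F)^T *m projT2 F) | F in Fmats (blockvecs t l)].

Definition isL (t : T) (k l : nat) : Prop :=
  (exists s, tau t l = Some s /\ (s.+1 <= k)%N) /\
  (forall l' s', tau t l' = Some s' -> (s'.+1 <= k)%N -> (l' <= l)%N).

End RK.

(* Write r_k = x_k - x* - P_N(x0 - x* ) and u_k = A'w_k / ||A'w_k||.  As b = A x* and
   A'w_k lies in R(w), one step of the iteration is r_{k+1} = (I - u_k u_k') r_k, and
   r_0 = P_R(x0 - x* ); hence r_k stays in R(w) and ||r_k|| never increases.  On the
   l-th block the u_j span R(w), so r at the start of the block lies in the column
   space of every F in F_l, and Meany's inequality
     ||(I - u_e u_e') ... (I - u_s u_s') F c||^2 <= (1 - det(F'F)) ||F c||^2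
   (by induction on the number of projections, adding one column to F at a time and
   splitting its Gram determinant through a Schur complement) contracts ||r||^2 by
   gamma_l over the block.  Finally gamma_l < 1 because the matrices in F_l have their
   columns among finitely many vectors, so their Gram determinants are bounded below
   by a positive minimum. *)

From HB Require Import structures.
From mathcomp Require Import all_boot all_order all_algebra.
From mathcomp Require Import all_classical all_reals all_analysis.
From mathcomp Require Import ring lra zify.
Import Order.TTheory GRing.Theory Num.Theory.
Local Open Scope ring_scope.
Local Open Scope classical_set_scope.
Set Implicit Arguments. Unset Strict Implicit. Unset Printing Implicit Defensive.

Lemma mulmx_sum_col (R : comPzRingType) p m (F : 'M[R]_(p, m)) (c : 'cV[R]_m) :
  F *m c = \sum_i c i 0 *: col i F.
Proof.
apply/matrixP => i j; rewrite !mxE summxE; apply: eq_bigr => k _.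
by rewrite !mxE (ord1 j) mulrC.
Qed.

Lemma col_row_mx_pred (T : Type) d m (v : 'cV[T]_d) (F : 'M[T]_(d, m)) (P : 'cV[T]_d -> Prop) :
  P v -> (forall i, P (col i F)) -> forall i, P (col i (row_mx v F : 'M[T]_(d, 1 + m))).
Proof.
move=> Pv PF i; case: (splitP i) => j ij.
  have -> : i = lshift m j by apply: val_inj.
  rewrite colKl (ord1 j); suff -> : col ord0 v = v by [].
  by apply/matrixP => r c; rewrite (ord1 c) !mxE.
have -> : i = rshift 1 j by apply: val_inj.
by rewrite colKr.
Qed.

Section Dot.
Variable R : realType.
Implicit Types m : nat.

Lemma dotvE m (u v : 'cV[R]_m) : dotv u v = \sum_i u i 0 * v i 0.
Proof. by rewrite /dotv !mxE; apply: eq_bigr => i _; rewrite !mxE. Qed.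

Lemma dotvC m (u v : 'cV[R]_m) : dotv u v = dotv v u.
Proof. by rewrite !dotvE; apply: eq_bigr => i _; rewrite mulrC. Qed.

Lemma dotvDl m (u v z : 'cV[R]_m) : dotv (u + v) z = dotv u z + dotv v z.
Proof. by rewrite !dotvE -big_split; apply: eq_bigr => i _; rewrite !mxE mulrDl. Qed.

Lemma dotvDr m (u v z : 'cV[R]_m) : dotv z (u + v) = dotv z u + dotv z v.
Proof. by rewrite dotvC dotvDl !(dotvC z). Qed.

Lemma dotvZl m a (u z : 'cV[R]_m) : dotv (a *: u) z = a * dotv u z.
Proof. by rewrite !dotvE mulr_sumr; apply: eq_bigr => i _; rewrite !mxE mulrA. Qed.

Lemma dotvZr m a (u z : 'cV[R]_m) : dotv z (a *: u) = a * dotv z u.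
Proof. by rewrite dotvC dotvZl dotvC. Qed.

Lemma dotvNl m (u z : 'cV[R]_m) : dotv (- u) z = - dotv u z.
Proof. by rewrite -scaleN1r dotvZl mulN1r. Qed.

Lemma dotvNr m (u z : 'cV[R]_m) : dotv z (- u) = - dotv z u.
Proof. by rewrite dotvC dotvNl dotvC. Qed.

Lemma dotvBl m (u v z : 'cV[R]_m) : dotv (u - v) z = dotv u z - dotv v z.
Proof. by rewrite dotvDl dotvNl. Qed.

Lemma dotvBr m (u v z : 'cV[R]_m) : dotv z (u - v) = dotv z u - dotv z v.
Proof. by rewrite dotvDr dotvNr. Qed.

Lemma dotv0l m (z : 'cV[R]_m) : dotv 0 z = 0.
Proof. by rewrite dotvE big1 // => i _; rewrite mxE mul0r. Qed.

Lemma dotv0r m (z : 'cV[R]_m) : dotv z 0 = 0.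
Proof. by rewrite dotvC dotv0l. Qed.

Lemma dotv_ge0 m (v : 'cV[R]_m) : 0 <= dotv v v.
Proof. by rewrite dotvE sumr_ge0 // => i _; rewrite -expr2 sqr_ge0. Qed.

Lemma dotv_eq0 m (v : 'cV[R]_m) : dotv v v = 0 -> v = 0.
Proof.
rewrite dotvE => /eqP; rewrite psumr_eq0; last by move=> i _; rewrite -expr2 sqr_ge0.
move=> /allP v0; apply/matrixP => i j; rewrite (ord1 j) mxE.
by have /(_ (mem_index_enum i)) := v0 i; rewrite -expr2 sqrf_eq0 => /eqP.
Qed.

Lemma norm2_sq m (v : 'cV[R]_m) : norm2 v ^+ 2 = dotv v v.
Proof. by rewrite /norm2 sqr_sqrtr // dotv_ge0. Qed.

Lemma dotv_mull m k (M : 'M[R]_(m, k)) (c : 'cV[R]_k) (v : 'cV[R]_m) :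
  dotv (M *m c) v = dotv c (M^T *m v).
Proof. by rewrite /dotv trmx_mul mulmxA. Qed.

Lemma dotv_mulr m k (M : 'M[R]_(m, k)) (c : 'cV[R]_k) (v : 'cV[R]_m) :
  dotv v (M *m c) = dotv (M^T *m v) c.
Proof. by rewrite dotvC dotv_mull dotvC. Qed.

Lemma dotv_sqr_le m (u v : 'cV[R]_m) : dotv u v ^+ 2 <= dotv u u * dotv v v.
Proof.
have [/dotv_eq0 ->|u_neq0] := eqVneq (dotv u u) 0.
  by rewrite !dotv0l expr0n mul0r.
have u_gt0 : 0 < dotv u u by rewrite lt_def u_neq0 dotv_ge0.
have := dotv_ge0 (dotv u u *: v - dotv u v *: u).
rewrite !(dotvBl, dotvBr, dotvZl, dotvZr) (dotvC v u) => ge0.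
have : 0 <= dotv u u * (dotv u u * dotv v v - dotv u v ^+ 2).
  by move: ge0; congr (_ <= _); ring.
by rewrite pmulr_rge0 // subr_ge0.
Qed.

End Dot.

Section Gram.
Variables (R : realType) (d : nat).

Lemma gramE m (F : 'M[R]_(d, m)) i j : (F^T *m F) i j = dotv (col i F) (col j F).
Proof. by rewrite dotvE mxE; apply: eq_bigr => k _; rewrite !mxE. Qed.

Lemma mulmx_trmx_self_eq0 p q (M : 'M[R]_(p, q)) : M *m M^T = 0 -> M = 0.
Proof.
move=> MMt0; apply/row_matrixP => i; rewrite row0 -[row i M]trmxK.
apply/eqP; rewrite trmx_eq0; apply/eqP/dotv_eq0.
transitivity ((M *m M^T) i i); last by rewrite MMt0 mxE.
by rewrite dotvE mxE; apply: eq_bigr => j _; rewrite !mxE.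
Qed.

Lemma mxrank_gram m (F : 'M[R]_(d, m)) : \rank (F^T *m F) = \rank F.
Proof.
apply/eqP; rewrite eqn_leq mxrankM_maxr /=.
have kerS : (kermx (F^T *m F) <= kermx F^T)%MS.
  rewrite sub_kermx; apply/eqP/mulmx_trmx_self_eq0.
  by rewrite trmx_mul trmxK mulmxA -(mulmxA _ F^T) mulmx_ker mul0mx.
have := mxrankS kerS; rewrite !mxrank_ker mxrank_tr.
have := rank_leq_col F; have := rank_leq_row (F^T *m F); lia.
Qed.

Lemma normal_equations_solvable m (F : 'M[R]_(d, m)) (v : 'cV[R]_d) :
  exists c, F^T *m (v - F *m c) = 0.
Proof.
have /andP [_ FS] : (F^T *m F == F)%MS.
  by rewrite -(mxrank_leqif_eq (submxMl _ _)).2 mxrank_gram.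
have /submxP [c vF] := submx_trans (submxMl v^T F) FS.
exists c^T; rewrite mulmxBr mulmxA -[F^T *m v]trmxK trmx_mul trmxK vF.
by rewrite trmx_mul trmx_mul trmxK subrr.
Qed.

Lemma gram_det_row_mx m (u : 'cV[R]_d) (F : 'M[R]_(d, m)) (c : 'cV[R]_m) :
  F^T *m (u - F *m c) = 0 ->
  \det ((row_mx u F)^T *m row_mx u F) =
  dotv (u - F *m c) (u - F *m c) * \det (F^T *m F).
Proof.
move=> Fq0; set q := u - F *m c.
have qF0 : q^T *m F = 0 by rewrite -[q^T *m F]trmxK trmx_mul trmxK Fq0 trmx0.
pose U : 'M[R]_(1 + m) := block_mx 1%:M 0 (- c) 1%:M.
have detU : \det U = 1 by rewrite det_lblock !det1 mulr1.
have uFU : row_mx u F *m U = row_mx q F.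
  by rewrite mul_row_block !mulmx1 !mulmx0 ?addr0 ?add0r mulmxN.
have -> : \det ((row_mx u F)^T *m row_mx u F) = \det ((row_mx q F)^T *m row_mx q F).
  by rewrite -uFU trmx_mul mulmxA -(mulmxA U^T) !det_mulmx det_tr detU; ring.
by rewrite tr_row_mx mul_col_row Fq0 qF0 det_ublock det_mx11.
Qed.

Lemma gram_det_recl m (F : 'M[R]_(d, 1 + m)) :
  exists2 q : 'cV[R]_d, dotv q q <= dotv (lsubmx F) (lsubmx F) &
    \det (F^T *m F) = dotv q q * \det ((rsubmx F)^T *m rsubmx F).
Proof.
have [c Fc] := normal_equations_solvable (rsubmx F) (lsubmx F).
set q := lsubmx F - rsubmx F *m c in Fc *.
exists q; last by rewrite -(gram_det_row_mx Fc) hsubmxK.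
have -> : lsubmx F = q + rsubmx F *m c by rewrite subrK.
clearbody q; rewrite !(dotvDl, dotvDr) dotv_mull dotv_mulr Fc dotv0l dotv0r.
by rewrite add0r addr0 lerDl dotv_ge0.
Qed.

Lemma gram_det_ge0 m (F : 'M[R]_(d, m)) : 0 <= \det (F^T *m F).
Proof.
elim: m F => [|m IH] F; first by rewrite det_mx00.
by have [q _ ->] := gram_det_recl F; rewrite mulr_ge0 ?dotv_ge0.
Qed.

Lemma gram_det_gt0 m (F : 'M[R]_(d, m)) : \rank F = m -> 0 < \det (F^T *m F).
Proof.
move=> rkF; rewrite lt_def gram_det_ge0 andbT -unitfE -unitmxE -row_free_unit.
by rewrite /row_free mxrank_gram rkF.
Qed.

Lemma gram_det_le1 m (F : 'M[R]_(d, m)) :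
  (forall i, dotv (col i F) (col i F) = 1) -> \det (F^T *m F) <= 1.
Proof.
elim: m F => [|m IH]; first by move=> F _; rewrite det_mx00.
change m.+1 with (1 + m)%N => F unitF.
have [q qle ->] := gram_det_recl F.
have lsubmx1 : dotv (lsubmx F) (lsubmx F) = 1.
  rewrite -(unitF (lshift m ord0)) -[in col _ F](hsubmxK F) colKl.
  by congr dotv; apply/matrixP => i j; rewrite !mxE (ord1 j).
rewrite -[1]mulr1 ler_pM ?dotv_ge0 ?gram_det_ge0 //; first by rewrite -lsubmx1.
by apply: IH => i; rewrite -(unitF (rshift 1 i)) -[in col _ F](hsubmxK F) colKr.
Qed.

End Gram.

Lemma meany_scalar_ineq (R : realFieldType) (Z U al la s c : R) :
  0 <= c <= 1 -> 0 < s <= 1 -> 0 <= U -> 0 <= Z <= c * U ->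
  al ^+ 2 <= (1 - s) * Z ->
  Z + la ^+ 2 * s - (al + la * s) ^+ 2 <= (1 - s * (1 - c)) * (U + la ^+ 2 * s).
Proof.
move=> /andP [c0 c1] /andP [s0 s1] U0 /andP [Z0 ZU] alZ.
rewrite -subr_ge0.
set E := (X in 0 <= X).
have -> : E = U * (1 - s * (1 - c)) - Z + al ^+ 2 + 2 * al * s * la + c * s ^+ 2 * la ^+ 2.
  by rewrite /E; ring.
have [c_eq0|c_neq0] := eqVneq c 0.
  have Z_eq0 : Z = 0 by apply/eqP; rewrite eq_le Z0 andbT -(mul0r U) -c_eq0.
  have al_eq0 : al = 0.
    by apply/eqP; rewrite -sqrf_eq0 eq_le sqr_ge0 andbT -(mulr0 (1 - s)) -Z_eq0.
  by rewrite Z_eq0 al_eq0 c_eq0; nra.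
have c_gt0 : 0 < c by rewrite lt_def c_neq0 c0.
rewrite -(pmulr_rge0 _ c_gt0).
(* completing the square in [la] *)
have -> : c * (U * (1 - s * (1 - c)) - Z + al ^+ 2 + 2 * al * s * la + c * s ^+ 2 * la ^+ 2)
   = (al + c * s * la) ^+ 2 + (c * U - Z) * (1 - s * (1 - c))
     + ((1 - s) * Z - al ^+ 2) * (1 - c) by ring.
by rewrite !addr_ge0 ?sqr_ge0 // mulr_ge0 // subr_ge0 //; nra.
Qed.

Section Meany.
Variables (R : realType) (d : nat).
Implicit Types (a x : 'cV[R]_d).

Definition hyperplane_proj a x : 'cV[R]_d := x - dotv a x *: a.

Lemma dotv_hyperplane_proj a x : dotv a a = 1 ->
  dotv (hyperplane_proj a x) (hyperplane_proj a x) = dotv x x - dotv a x ^+ 2.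
Proof.
by move=> a1; rewrite !(dotvBl, dotvBr, dotvZl, dotvZr) a1 (dotvC x a); ring.
Qed.

Lemma hyperplane_proj_le a x : dotv a a = 1 ->
  dotv (hyperplane_proj a x) (hyperplane_proj a x) <= dotv x x.
Proof. by move=> a1; rewrite dotv_hyperplane_proj // lerBlDr lerDl sqr_ge0. Qed.

Lemma meany_step m (F : 'M[R]_(d, m)) (Q : 'cV[R]_d -> 'cV[R]_d) a (c0 : 'cV[R]_m) :
  dotv a a = 1 -> \det (F^T *m F) <= 1 ->
  F^T *m (a - F *m c0) = 0 -> a - F *m c0 != 0 ->
  (forall e v, F^T *m v = 0 -> Q (F *m e + v) = Q (F *m e) + v) ->
  (forall e, exists e', Q (F *m e) = F *m e') ->
  (forall e, dotv (Q (F *m e)) (Q (F *m e)) <= (1 - \det (F^T *m F)) * dotv (F *m e) (F *m e)) ->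
  forall c, dotv (hyperplane_proj a (Q (row_mx a F *m c)))
                 (hyperplane_proj a (Q (row_mx a F *m c)))
    <= (1 - \det ((row_mx a F)^T *m row_mx a F)) * dotv (row_mx a F *m c) (row_mx a F *m c).
Proof.
move=> a1 detF1 Fp0 p_neq0 Q_orth Q_col Q_contr c.
rewrite (gram_det_row_mx Fp0).
set p := a - F *m c0 in Fp0 p_neq0 *.
have aE : a = p + F *m c0 by rewrite subrK.
clearbody p.
have pF e : dotv p (F *m e) = 0 by rewrite dotv_mulr Fp0 dotv0l.
have Fp e : dotv (F *m e) p = 0 by rewrite dotvC pF.
have s_gt0 : 0 < dotv p p.
  by rewrite lt_def dotv_ge0 andbT; apply: contra p_neq0 => /eqP/dotv_eq0 ->.
have Fc0 : dotv (F *m c0) (F *m c0) = 1 - dotv p p.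
  by rewrite -a1 aE !(dotvDl, dotvDr) pF Fp addr0 add0r addrC addKr.
pose la := c ord0 0; pose c' := la *: c0 + dsubmx (c : 'cV[R]_(1 + m)).
have -> : row_mx a F *m c = F *m c' + la *: p.
  rewrite -[c](@vsubmxK _ 1 m) mul_row_col [usubmx _]mx11_scalar mul_mx_scalar.
  rewrite /c' mulmxDr -scalemxAr aE scalerDr !mxE /la.
  have -> : lshift m (0 : 'I_1) = ord0 :> 'I_(1 + m) by apply: val_inj.
  by rewrite [RHS]addrC addrA.
have [e Qc'] := Q_col c'.
rewrite Q_orth ?Qc'; last by rewrite -scalemxAr Fp0 scaler0.
have := Q_contr c'; rewrite Qc' => contr.
have alZ := dotv_sqr_le (F *m c0) (F *m e); rewrite Fc0 in alZ.
have c_range : 0 <= 1 - \det (F^T *m F) <= 1.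
  by rewrite subr_ge0 detF1 lerBlDr lerDl gram_det_ge0.
have s_range : 0 < dotv p p <= 1 by rewrite s_gt0 -subr_ge0 -Fc0 dotv_ge0.
have Z_range : 0 <= dotv (F *m e) (F *m e) <= (1 - \det (F^T *m F)) * dotv (F *m c') (F *m c').
  by rewrite dotv_ge0 contr.
have := meany_scalar_ineq la c_range s_range (dotv_ge0 _) Z_range alZ.
rewrite dotv_hyperplane_proj // aE.
rewrite !(dotvDl, dotvDr, dotvZl, dotvZr) !pF !Fp.
lra.
Qed.

Variable u : nat -> 'cV[R]_d.

Fixpoint proj_chain (lo k : nat) x : 'cV[R]_d :=
  if k is k'.+1 then hyperplane_proj (u (lo + k')) (proj_chain lo k' x) else x.

Lemma proj_chainD_orth lo k x v :
  (forall j, (j < k)%N -> dotv (u (lo + j)) v = 0) ->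
  proj_chain lo k (x + v) = proj_chain lo k x + v.
Proof.
elim: k => [//|k IH] uv0 /=; rewrite IH => [|j /ltnW]; last exact: uv0.
by rewrite /hyperplane_proj dotvDr uv0 // addr0 addrAC.
Qed.

Lemma proj_chain_col lo k m (F : 'M[R]_(d, m)) c :
  (forall j, (j < k)%N -> exists e, u (lo + j) = F *m e) ->
  exists e, proj_chain lo k (F *m c) = F *m e.
Proof.
elim: k => [|k IH] uF /=; first by exists c.
have [e ->] := IH (fun j jk => uF j (ltnW jk)).
have [e' ->] := uF k (ltnSn k).
by exists (e - dotv (F *m e') (F *m e) *: e'); rewrite /hyperplane_proj mulmxBr -scalemxAr.
Qed.

Hypothesis u_unit : forall j, dotv (u j) (u j) = 1.

Theorem meany_inequality lo k : exists m (F : 'M[R]_(d, m)),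
  [/\ forall i, exists2 j, (lo <= j < lo + k)%N & col i F = u j,
      0 < \det (F^T *m F),
      forall j, (lo <= j < lo + k)%N -> exists c, u j = F *m c &
      forall c, dotv (proj_chain lo k (F *m c)) (proj_chain lo k (F *m c))
                <= (1 - \det (F^T *m F)) * dotv (F *m c) (F *m c)].
Proof.
elim: k => [|k [m [F [Fu detF_gt0 uF contr]]]].
  exists 0%N, 0; split=> [[]//||j|c]; first by rewrite det_mx00.
    by rewrite addn0 ltnNge => /andP [->].
  by rewrite /= mul0mx dotv0l mulr0.
have detF1 : \det (F^T *m F) <= 1.
  by apply: gram_det_le1 => i; have [j _ ->] := Fu i.
have in_range j : (lo <= j < lo + k)%N -> (lo <= j < lo + k.+1)%N.
  by case/andP => -> /= /ltn_trans; apply; rewrite addnS.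
have [[c0 aF]|a_notin] := pselect (exists c, u (lo + k) = F *m c).
  exists m, F; split=> // [i|j|c].
  - by have [j jr ->] := Fu i; exists j => //; apply: in_range.
  - case/andP=> lo_j; rewrite addnS ltnS leq_eqVlt => /orP [/eqP ->|jk].
      by exists c0.
    by apply: uF; rewrite lo_j.
  - by apply: le_trans (contr c); apply: hyperplane_proj_le.
have [c0 Fp0] := normal_equations_solvable F (u (lo + k)).
have p_neq0 : u (lo + k) - F *m c0 != 0.
  by apply: contra_not_neq a_notin => /eqP; rewrite subr_eq0 => /eqP ->; exists c0.
have uF_le j : (j < k)%N -> exists e, u (lo + j) = F *m e.
  by move=> jk; apply: uF; rewrite leq_addr ltn_add2l.
exists (1 + m)%N, (row_mx (u (lo + k)) F); split.
- apply: (col_row_mx_pred (P := fun v => exists2 j, (lo <= j < lo + k.+1)%N & v = u j)).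
    by exists (lo + k)%N => //; rewrite leq_addr addnS ltnS leqnn.
  by move=> i; have [j jr ->] := Fu i; exists j => //; apply: in_range.
- by rewrite (gram_det_row_mx Fp0) mulr_gt0 // lt_def dotv_ge0 andbT;
    apply: contra p_neq0 => /eqP/dotv_eq0 ->.
- move=> j /andP [lo_j]; rewrite addnS ltnS leq_eqVlt => /orP [/eqP ->|jk].
    by exists (col_mx 1%:M 0); rewrite mul_row_col mulmx0 addr0 mulmx1.
  have [e ->] : exists e, u j = F *m e by apply: uF; rewrite lo_j.
  by exists (col_mx 0 e); rewrite mul_row_col mulmx0 add0r.
- apply: (meany_step (u_unit _) detF1 Fp0 p_neq0 _ _ contr) => [e v Fv0|e].
    apply: proj_chainD_orth => j /uF_le [e' ->].
    by rewrite dotv_mull Fv0 dotv0r.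
  exact: proj_chain_col.
Qed.

End Meany.

Section Span.
Variables (R : realType) (d : nat).
Implicit Types (S : set 'cV[R]_d) (v : 'cV[R]_d).

Lemma spanS_colspace S m (F : 'M[R]_(d, m)) v :
  (forall s, S s -> exists c, s = F *m c) -> spanS S v -> exists c, v = F *m c.
Proof.
move=> SF [k [c [s [Ss ->]]]]; elim: k c s Ss => [|k IH] c s Ss.
  by exists 0; rewrite big_ord0 mulmx0.
rewrite big_ord_recr /=.
have [e ->] := IH (fun i => c (widen_ord (leqnSn k) i)) (fun i => s (widen_ord (leqnSn k) i))
  (fun i => Ss _).
have [e' ->] := SF _ (Ss ord_max).
by exists (e + c ord_max *: e'); rewrite mulmxDr scalemxAr.
Qed.

Lemma exists_col_basis S : exists m (F : 'M[R]_(d, m)),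
  (forall i, S (col i F)) /\ forall s, S s -> exists c, s = F *m c.
Proof.
pose has_rank (r : nat) :=
  `[< exists m (F : 'M[R]_(d, m)), (forall i, S (col i F)) /\ \rank F = r >].
have rank0 : has_rank 0%N.
  by apply/asboolP; exists 0%N, 0; split=> [[]//|]; apply/eqP; rewrite -leqn0 rank_leq_col.
have rank_le r : has_rank r -> (r <= d)%N by move=> /asboolP [m [F [_ <-]]]; exact: rank_leq_row.
have [r /asboolP [m [F [FS <-]]] rank_max] := ex_maxnP (ex_intro _ 0%N rank0) rank_le.
exists m, F; split => // s Ss.
have /rank_max : has_rank (\rank (row_mx s F)).
  by apply/asboolP; exists (1 + m)%N, (row_mx s F); split => //; apply: col_row_mx_pred.
rewrite -mxrank_tr tr_row_mx -addsmxE -[X in (_ <= X)%N]mxrank_tr => rk_le.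
have : (s^T + F^T <= F^T)%MS.
  by rewrite -(mxrank_leqif_sup (addsmxSr _ _)).2 eqn_leq rk_le mxrankS ?addsmxSr.
rewrite addsmx_sub => /andP [/submxP [D sD] _].
by exists D^T; rewrite -[s]trmxK sD trmx_mul trmxK.
Qed.

Lemma projS_spanS S v : spanS S (projS (spanS S) v) /\
  forall z, spanS S z -> dotv z (v - projS (spanS S) v) = 0.
Proof.
suff /(xgetPex 0) : exists p, spanS S p /\ forall z, spanS S z -> dotv z (v - p) = 0 by [].
have [m [F [FS SF]]] := exists_col_basis S.
have [c Fc] := normal_equations_solvable F v.
exists (F *m c); split.
  by exists m, (fun i => c i 0), (fun i => col i F); split => //; rewrite mulmx_sum_col.
move=> z /(spanS_colspace SF) [e ->].
by rewrite dotv_mull Fc dotv0r.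
Qed.

Lemma orthS_lincomb S a b v v' :
  orthS S v -> orthS S v' -> orthS S (a *: v + b *: v').
Proof. by move=> Sv Sv' z Sz; rewrite dotvDr !dotvZr Sv // Sv' // !mulr0 addr0. Qed.

Lemma projS_orthS_spanS S v :
  projS (orthS (spanS S)) v = v - projS (spanS S) v.
Proof.
have [Sp Sp_orth] := projS_spanS S v; set p := projS _ v in Sp Sp_orth *.
have r_orth : orthS (spanS S) (v - p) by [].
apply: xget_unique; first by split => // z Sz; rewrite opprB addrC subrK dotvC Sz.
move=> y [Sy y_orth].
have Syr : orthS (spanS S) (y - (v - p)).
  by have := orthS_lincomb 1 (-1) Sy r_orth; rewrite scale1r scaleN1r.
apply/eqP; rewrite -subr_eq0; apply/eqP/dotv_eq0.
have yE : y - (v - p) = p - (v - y) by rewrite !opprB addrCA.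
by rewrite {2}yE dotvBr y_orth // dotvC Syr // subrr.
Qed.

End Span.

Section FmatsGram.
Variables (R : realType) (d : nat).
Implicit Types (V : set 'cV[R]_d) (u : nat -> 'cV[R]_d).

Lemma Fmats_det_gt0 V F : Fmats V F -> 0 < \det ((projT2 F)^T *m projT2 F).
Proof. by case: F => m M [_ [_ [rkM _]]]; exact: gram_det_gt0. Qed.

Lemma Fmats_det_le1 V F : (forall v, V v -> dotv v v = 1) -> Fmats V F ->
  \det ((projT2 F)^T *m projT2 F) <= 1.
Proof. by move=> V1; case: F => m M [_ [VM _]]; apply: gram_det_le1 => i; apply: V1. Qed.

Lemma Fmats_intro V m (F : 'M[R]_(d, m)) :
  (forall i, V (col i F)) -> 0 < \det (F^T *m F) ->
  (forall v, V v -> exists c, v = F *m c) -> Fmats V (existT _ m F).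
Proof.
move=> VF detF_gt0 FV.
have detF_neq0 : \det (F^T *m F) != 0 by rewrite gt_eqF.
have rkF : \rank F = m.
  by rewrite -mxrank_gram mxrank_unit // unitmxE unitfE.
split; [move=> i j eq_col | split=> //; split=> // v /FV [c ->] _].
  apply/eqP; apply: contraNT detF_neq0 => neq_ij; apply/eqP.
  by apply: determinant_alternate neq_ij _ => k; rewrite !gramE eq_col.
rewrite -[X in row_mx X _]mulmx1 -mul_mx_row ltnS -[X in (_ <= X)%N]rkF.
exact: mxrankM_maxl.
Qed.

(* A positive lower bound for the Gram determinants of all full-rank matrices
   with columns among u_0, ..., u_e: there are finitely many of them, each with
   at most d columns; singular matrices contribute 1 to the minimum. *)
Definition min_gram_det u e : R :=
  \big[Order.min/1]_(m < d.+1) \big[Order.min/1]_(g : {ffun 'I_m -> 'I_e.+1})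
    let M := \matrix_(r < d, i < m) u (g i) r 0 in
    if 0 < \det (M^T *m M) then \det (M^T *m M) else 1.

Lemma min_gram_det_gt0 u e : 0 < min_gram_det u e.
Proof.
apply/bigmin_gtP; split => [|m _]; first exact: ltr01.
apply/bigmin_gtP; split => [|g _]; first exact: ltr01.
by rewrite /=; case: ifP => // _; exact: ltr01.
Qed.

Lemma min_gram_det_le V u e F :
  (forall v, V v -> exists2 j, (j <= e)%N & v = u j) -> Fmats V F ->
  min_gram_det u e <= \det ((projT2 F)^T *m projT2 F).
Proof.
move=> Vu FV; have := Fmats_det_gt0 FV.
case: F FV => m M [_ [VM [/= rkM _]]] /= detM_gt0.
have m_le : (m < d.+1)%N by rewrite ltnS -rkM rank_leq_row.
apply/bigmin_leP; right; exists (Ordinal m_le) => //=.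
have idx i : exists j : 'I_e.+1, col i M = u j.
  by have [j je ->] := Vu _ (VM i); exists (Ordinal (je : (j < e.+1)%N)).
pose g := [ffun i => xget ord0 [set j : 'I_e.+1 | col i M = u j]].
apply/bigmin_leP; right; exists g => //=.
suff -> : \matrix_(r, i) u (g i) r 0 = M by rewrite detM_gt0.
apply/matrixP => r i; rewrite mxE ffunE.
by have /= <- := xgetPex ord0 (idx i); rewrite mxE.
Qed.

Lemma inf_Fmats_det V u e F0 :
  (forall v, V v -> exists2 j, (j <= e)%N & v = u j) -> Fmats V F0 ->
  let i := inf [set \det ((projT2 F)^T *m projT2 F) | F in Fmats V] in
  0 < i <= \det ((projT2 F0)^T *m projT2 F0).
Proof.
move=> Vu VF0 /=; set E := [set _ | F in _].
have E_lb : has_lbound E by exists 0 => _ [F VF <-]; exact/ltW/(Fmats_det_gt0 VF).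
rewrite (lt_le_trans (min_gram_det_gt0 u e)) /=.
  by apply: ge_inf => //; exists F0.
by apply: lb_le_inf => [|_ [F VF <-]]; [exists (\det ((projT2 F0)^T *m projT2 F0)), F0 |
  exact: min_gram_det_le VF].
Qed.

End FmatsGram.

Lemma first_time_Some (p : nat -> Prop) k : first_time p = Some k -> p k.
Proof.
rewrite /first_time; case: pselect => // -[k0 pk0] [<-].
have [m /asboolP pm m_min] := ex_minnP (ex_intro (fun k => `[< p k >]) k0 (asboolT pk0)).
suff /(xgetPex 0%N) [] : exists k, p k /\ forall j, p j -> (k <= j)%N by [].
by exists m; split => // j pj; apply/m_min/asboolP.
Qed.

Section RandomizedKaczmarz.
Variables (R : realType) (dT : measure_display) (T : measurableType dT)
  (P : probability T R) (n d : nat) (A : 'M[R]_(n, d)) (b : 'cV[R]_n)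
  (xstar : 'cV[R]_d) (w : T -> 'cV[R]_n) (ws : nat -> T -> 'cV[R]_n)
  (x0 : 'cV[R]_d) (t : T).
Hypothesis Axstar : A *m xstar = b.
Hypothesis ws_in_R : forall l, Rspace P A w (A^T *m ws l t).
Hypothesis ws_neq0 : forall l, A^T *m ws l t != 0.

Let pN := projS (Nspace P A w) (x0 - xstar).
Let err k := xiter A b ws x0 t k - xstar - pN.
Let dir j := A^T *m ws j t.
Let udir j := (norm2 (dir j))^-1 *: dir j.

Lemma projN_spec : Nspace P A w pN /\
  forall z, Nspace P A w z -> dotv z ((x0 - xstar) - pN) = 0.
Proof. exact: projS_spanS. Qed.

Lemma norm_dir_neq0 j : norm2 (dir j) != 0.
Proof.
apply: contra (ws_neq0 j) => /eqP dir0; apply/eqP/dotv_eq0.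
by rewrite -norm2_sq dir0 expr0n.
Qed.

Lemma udir_unit j : dotv (udir j) (udir j) = 1.
Proof.
rewrite /udir dotvZl dotvZr -norm2_sq mulrA -expr2 exprVn mulVf //.
by rewrite expf_neq0 // norm_dir_neq0.
Qed.

Lemma dirE j : dir j = norm2 (dir j) *: udir j.
Proof. by rewrite /udir scalerA mulfV ?scale1r // norm_dir_neq0. Qed.

Lemma udir_in_R j : Rspace P A w (udir j).
Proof.
have := orthS_lincomb (norm2 (dir j))^-1 0 (ws_in_R j) (ws_in_R j).
by rewrite scale0r addr0.
Qed.

Lemma err_step k : err k.+1 = hyperplane_proj (udir k) (err k).
Proof.
have [NpN _] := projN_spec.
set x := xiter A b ws x0 t k.
have res : (ws k t)^T *m (b - A *m x) = (- dotv (dir k) (err k))%:M.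
  rewrite [LHS]mx11_scalar -Axstar -mulmxBr mulmxA -[_ *m A]trmxK trmx_mul trmxK.
  by rewrite -/(dotv _ _) /err dotvBr (dotvC _ pN) (ws_in_R k NpN) subr0 -dotvNr opprB.
rewrite /err /= -/x -/(dir k) res mul_mx_scalar (addrAC x) (addrAC (x - xstar)).
rewrite /hyperplane_proj /udir dotvZl !scalerA -scaleNr; congr (_ + _ *: _).
by rewrite -exprVn expr2; ring.
Qed.

Lemma err_in_R k : Rspace P A w (err k).
Proof.
elim: k => [|k IH]; first by have [_ orth] := projN_spec; move=> z /orth.
rewrite err_step /hyperplane_proj -scaleNr -[err k]scale1r.
exact: orthS_lincomb IH (udir_in_R k).
Qed.

Lemma err_proj_chain lo k : err (lo + k) = proj_chain udir lo k (err lo).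
Proof. by elim: k => [|k IH]; rewrite ?addn0 // addnS err_step IH. Qed.

Lemma err_nonincr i j : (i <= j)%N -> dotv (err j) (err j) <= dotv (err i) (err i).
Proof.
move=> /subnK <-; elim: (j - i)%N => [|k IH]; first by rewrite add0n.
by rewrite addSn err_step; apply: le_trans IH; apply: hyperplane_proj_le; apply: udir_unit.
Qed.

Lemma tau_succ l e : tau P A w ws t l.+1 = Some e ->
  exists s, tau P A w ws t l = Some s /\ (bstart P A w ws t l.+1 <= e)%N /\
    segspan A ws t (bstart P A w ws t l.+1) e = Rspace P A w.
Proof.
rewrite /=; case tau_l: (tau P A w ws t l) => [s|] // /first_time_Some.
by exists s; split=> //; case: l tau_l => [|l] //= ->.
Qed.

Lemma block_meany l e : tau P A w ws t l.+1 = Some e ->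
  let lo := bstart P A w ws t l.+1 in
  exists m (F : 'M[R]_(d, m)),
    Fmats (blockvecs P A w ws t l.+1) (existT _ m F) /\
    dotv (err e.+1) (err e.+1) <= (1 - \det (F^T *m F)) * dotv (err lo) (err lo).
Proof.
move=> tau_e lo; have [_ [_ [lo_e span]]] := tau_succ tau_e; rewrite -/lo in lo_e span.
have [m [F [Fu detF_gt0 uF contr]]] := meany_inequality udir_unit lo (e.+1 - lo).
have lo_e1 : (lo + (e.+1 - lo))%N = e.+1 by rewrite subnKC // leqW.
rewrite lo_e1 in Fu uF.
have uF' j : (lo <= j <= e)%N -> exists c, udir j = F *m c.
  by case/andP=> lo_j j_e; apply: uF; rewrite lo_j ltnS.
have [c errF] : exists c, err lo = F *m c.
  move: (err_in_R lo); rewrite -span; apply: spanS_colspace => _ [j [j_range ->]].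
  have [c udirF] := uF' j j_range.
  by exists (norm2 (dir j) *: c); rewrite -scalemxAr -udirF -dirE.
exists m, F; split.
  apply: Fmats_intro => // [i|_ [j [lo_j [+ ->]]]]; last first.
    by rewrite tau_e => j_e; apply: uF'; rewrite lo_j.
  have [j /andP [lo_j j_e] ->] := Fu i; exists j.
  by rewrite tau_e -ltnS.
by rewrite -lo_e1 err_proj_chain errF.
Qed.

Lemma gamma_block_contraction l e : (0 < l)%N -> tau P A w ws t l = Some e ->
  0 <= gamma P A w ws t l < 1 /\
  dotv (err e.+1) (err e.+1)
    <= gamma P A w ws t l * dotv (err (bstart P A w ws t l)) (err (bstart P A w ws t l)).
Proof.
case: l => // l _ tau_e; have [m [F [FV contr]]] := block_meany tau_e.
have Vu v : blockvecs P A w ws t l.+1 v -> exists2 j, (j <= e)%N & v = udir j.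
  by case=> j [_ [+ ->]]; rewrite tau_e; exists j.
have V1 v : blockvecs P A w ws t l.+1 v -> dotv v v = 1.
  by case/Vu=> j _ ->; apply: udir_unit.
have /andP [inf_gt0 inf_le] := inf_Fmats_det Vu FV.
have detF_le1 := Fmats_det_le1 V1 FV.
rewrite /gamma subr_ge0 ltrBlDr ltrDl inf_gt0 (le_trans inf_le) //; split=> //.
by apply: le_trans contr _; rewrite ler_wpM2r ?dotv_ge0 // lerB.
Qed.

Lemma err_tau_le l e : tau P A w ws t l = Some e ->
  dotv (err e.+1) (err e.+1)
    <= (\prod_(1 <= j < l.+1) gamma P A w ws t j) * dotv (err 0) (err 0).
Proof.
elim: l e => [|l IH] e tau_e.
  by case: tau_e => <-; rewrite big_geq // mul1r; apply: err_nonincr.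
have [/andP [gamma_ge0 _] contr] := gamma_block_contraction (ltn0Sn l) tau_e.
case: l IH tau_e contr gamma_ge0 => [|l] IH tau_e contr gamma_ge0.
  by rewrite big_nat1.
have [s [tau_s _]] := tau_succ tau_e.
have bstartE : bstart P A w ws t l.+2 = s.+1 by rewrite /bstart tau_s.
rewrite bstartE in contr; apply: (le_trans contr).
apply: le_trans (ler_wpM2l gamma_ge0 (IH _ tau_s)) _.
by rewrite [in X in _ <= X]big_nat_recr //= mulrA (mulrC (gamma P A w ws t l.+2)).
Qed.

End RandomizedKaczmarz.

Unset Implicit Arguments.

Theorem mainTheorem10 (R : realType) (dT : measure_display) (T : measurableType dT)
  (P : probability T R) (n d : nat) (A : 'M[R]_(n, d)) (b : 'cV[R]_n)
  (xstar : 'cV[R]_d) (w : T -> 'cV[R]_n) (ws : nat -> T -> 'cV[R]_n)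
  (x0 : 'cV[R]_d) :
  A *m xstar = b ->
  (forall i, measurable_fun setT (fun t => w t i 0)) ->
  (forall l i, measurable_fun setT (fun t => ws l t i 0)) ->
  (forall l, {ae P, forall t, Rspace P A w (A^T *m ws l t)}) ->
  (forall l, {ae P, forall t, A^T *m ws l t != 0}) ->
  {ae P, forall t,
    (forall l e, (0 < l)%N -> tau P A w ws t l = Some e ->
        0 <= gamma P A w ws t l < 1) /\
    (forall l e, tau P A w ws t l = Some e ->
        norm2 (xiter A b ws x0 t e.+1 - xstar - projS (Nspace P A w) (x0 - xstar)) ^+ 2
        <= (\prod_(1 <= j < l.+1) gamma P A w ws t j)
           * norm2 (projS (Rspace P A w) (x0 - xstar)) ^+ 2) /\
    (forall k l, isL P A w ws t k l ->
        norm2 (xiter A b ws x0 t k - xstar - projS (Nspace P A w) (x0 - xstar)) ^+ 2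
        <= (\prod_(1 <= j < l.+1) gamma P A w ws t j)
           * norm2 (projS (Rspace P A w) (x0 - xstar)) ^+ 2)}.
Proof.
move=> Axstar _ _ ws_in_R ws_neq0.
apply: filterS2 (ae_foralln ws_in_R) (ae_foralln ws_neq0) => t in_R neq0.
rewrite /Rspace projS_orthS_spanS norm2_sq; split; [|split].
- by move=> l e l_gt0 /(gamma_block_contraction x0 Axstar in_R neq0 l_gt0) [].
- by move=> l e tau_e; rewrite norm2_sq; apply: err_tau_le tau_e.
- move=> k l [[s [tau_s s_lt_k]] _]; rewrite norm2_sq.
  exact: le_trans (err_nonincr x0 Axstar in_R neq0 s_lt_k) (err_tau_le x0 Axstar in_R neq0 tau_s).
Qed.
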